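(* Let $L_0$ be the boundary value problem on the tree $G$ (with $m$ edges, vertex set $V$ and boundary conditions BC) with $\sigma_j\equiv0$ and $\gamma_j=0$ for all $j$, and let $\Delta_0(\lambda)$ be its characteristic function. Then, as $\rho=i\tau$, $\tau\to+\infty$, $$\Delta_0(\rho^2)=\tau^{1-d}\,2^{-m}\prod_{v\in V}|E_v|\,\exp(m\tau\pi)\,(1+o(1)),$$ where $d$ is the number of Dirichlet conditions among BC and $|E_v|$ is the degree of $v$.
   Context: Let $G$ be a finite tree with vertex set $V$ and edges $e_1,\dots,e_m$ ($m\ge1$), all of length $\pi$; $E_v$ is the set of edges incident to $v$. Vertices of degree $1$ are boundary vertices, the others internal. Each edge $e_j$ is parametrized by $x_j\in[0,\pi]$. For the zero-potential problem all quasi-derivatives are ordinary derivatives. The problem $L_0$: $-y_j''=\lambda y_j$ on $(0,\pi)$, $j=1,\dots,m$; at each internal vertex $v$, continuity $y_j(v)=y_k(v)$ ($e_j,e_k\in E_v$) and Kirchhoff's condition $\sum_{e_j\in E_v}y_j^{[1]}(v)=0$, where $y_j^{[1]}(v)=-y_j'(0)$ if $v$ corresponds to $x_j=0$ and $y_j^{[1]}(v)=y_j'(\pi)$ if $v$ corresponds to $x_j=\pi$; at each boundary vertex either Dirichlet $y(v)=0$ or Neumann $y^{[1]}(v)=0$ (a fixed choice BC). Let $C_j,S_j$ solve $-y''=\lambda y$ with $C_j(0)=S_j'(0)=1$, $C_j'(0)=S_j(0)=0$. The characteristic function is defined recursively: for $m=1$, it is $S_1(\pi,\lambda)$, $S_1'(\pi,\lambda)$,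 $C_1(\pi,\lambda)$, $C_1'(\pi,\lambda)$ for the conditions $y(0)=y(\pi)=0$, $y(0)=y'(\pi)=0$, $y'(0)=y(\pi)=0$, $y'(0)=y'(\pi)=0$ respectively; for $m>1$, choose an internal vertex $u$ of degree $s$, split $G$ at $u$ into subtrees $G_1,\dots,G_s$, let $\Delta_j^D,\Delta_j^N$ be characteristic functions of the analogous problems on $G_j$ with Dirichlet, resp. Neumann, condition at $u$ (other conditions unchanged), and set $\Delta=\sum_{j}\Delta_j^N\prod_{k\ne j}\Delta_k^D$. Here $\rho=\sqrt\lambda$, $\mathrm{Re}\,\rho\ge 0$. *)

From HB Require Import structures.
From mathcomp Require Import all_boot all_order all_algebra complex.
From mathcomp Require Import all_classical all_reals all_analysis.
Set Implicit Arguments. Unset Strict Implicit. Unset Printing Implicit Defensive.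
Import Order.TTheory GRing.Theory Num.Theory.
Local Open Scope complex_scope.
Local Open Scope ring_scope.

Definition coshR (R : realType) (y : R) : R := (expR y + expR (- y)) / 2.
Definition sinhR (R : realType) (y : R) : R := (expR y - expR (- y)) / 2.

Definition ccos (R : realType) (z : R[i]) : R[i] :=
  let: a +i* b := z in (cos a * coshR b) +i* (- (sin a * sinhR b)).
Definition csin (R : realType) (z : R[i]) : R[i] :=
  let: a +i* b := z in (sin a * coshR b) +i* (cos a * sinhR b).

(* Zero potential: C(x,l) = cos(rho x), S(x,l) = sin(rho x)/rho, l = rho^2. *)
(* All functions below are functions of rho and give the value at          *)
(* lambda = rho^2 (they are even in rho).                                  *)
Definition Spi (R : realType) (rho : R[i]) : R[i] :=
  if rho == 0 then (pi : R)%:C else csin (rho * (pi : R)%:C) / rho.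
Definition dSpi (R : realType) (rho : R[i]) : R[i] := ccos (rho * (pi : R)%:C).
Definition Cpi (R : realType) (rho : R[i]) : R[i] := ccos (rho * (pi : R)%:C).
Definition dCpi (R : realType) (rho : R[i]) : R[i] :=
  - rho * csin (rho * (pi : R)%:C).

(* Boundary conditions are booleans: true = Dirichlet, false = Neumann.
   [base_charfun b0 b1] is the characteristic function of the one-edge
   problem with condition b0 at x = 0 and b1 at x = pi. *)
Definition base_charfun (R : realType) (b0 b1 : bool) : R[i] -> R[i] :=
  match b0, b1 with
  | true, true => @Spi R
  | true, false => @dSpi R
  | false, true => @Cpi R
  | false, false => @dCpi R
  end.

(* Graphs: a graph on the vertex type V is a list of edges; edge (a, b) is *)
(* parametrized by x in [0, pi] with a at x = 0 and b at x = pi.           *)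
Section Graphs.
Variable V : finType.
Implicit Types (es : seq (V * V)) (v : V).

Definition incident v (e : V * V) : bool := (e.1 == v) || (e.2 == v).

Definition vset es : {set V} := [set v | has (incident v) es].

Definition deg es v : nat := count (incident v) es.

Definition adj es : rel V := [rel x y | ((x, y) \in es) || ((y, x) \in es)].

Definition is_tree es : bool :=
  [&& es != [::],
      [forall x in vset es, forall y in vset es, connect (adj es) x y]
    & size es == #|vset es|.-1].

Definition bc_at (bc : V -> bool) (u : V) (b : bool) : V -> bool :=
  fun v => if v == u then b else bc v.

Definition n_dirichlet es (bc : V -> bool) : nat :=
  #|[set v in vset es | (deg es v == 1%N) && bc v]|.
End Graphs.

(* [charfun es bc D] : D is a characteristic function of the problem L_0 on *)
(* the tree es with boundary conditions bc (for some admissible sequence   *)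
(* of choices of splitting vertices).  D rho is the value at lambda=rho^2. *)
Inductive charfun (R : realType) (V : finType)
  : seq (V * V) -> (V -> bool) -> (R[i] -> R[i]) -> Prop :=
| cf_edge (a b : V) (bc : V -> bool) :
    a != b -> charfun [:: (a, b)] bc (@base_charfun R (bc a) (bc b))
| cf_split (es : seq (V * V)) (bc : V -> bool) (u : V) (s : nat)
    (parts : 'I_s -> seq (V * V)) (DD DN : 'I_s -> R[i] -> R[i]) :
    is_tree es ->
    (1 < deg es u)%N ->
    perm_eq (flatten [seq parts i | i <- enum 'I_s]) es ->
    (forall i, is_tree (parts i)) ->
    (forall i, deg (parts i) u = 1%N) ->
    (forall i j, i != j -> vset (parts i) :&: vset (parts j) = [set u]) ->
    (forall i, charfun (parts i) (bc_at bc u true) (DD i)) ->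
    (forall i, charfun (parts i) (bc_at bc u false) (DN i)) ->
    charfun es bc
      (fun rho => \sum_(i < s) DN i rho * \prod_(k < s | k != i) DD k rho).

Definition main_term (R : realType) (V : finType) (es : seq (V * V))
  (bc : V -> bool) (tau : R) : R :=
  tau ^ (1%:Z - (n_dirichlet es bc)%:Z) * (2 ^- size es)
  * (\prod_(v in vset es) (deg es v)%:R) * expR ((size es)%:R * tau * pi).

(** Along the ray [rho = i t], [t > 0], every characteristic function is
   real, and we show by induction on [charfun] that its ratio to the main term
   [M] tends to [1].  For a single edge the four functions are
   [sinh(t pi)/t], [cosh(t pi)] (twice) and [t sinh(t pi)], whose ratios to [M]
   are [1 -+ exp(-2 t pi)].  When [G] is split at a vertex [u] of degree [s]
   into [G_1, ..., G_s], edges and degrees add up (with [|E_u| = s] coming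
   from [s] pendant edges), and a Dirichlet condition at [u] adds one to the
   Dirichlet count of each part while the Neumann counts add up to that of
   [G].  Hence [M(G_j^N) * prod_(k <> j) M(G_k^D) = M(G) / s] for every [j],
   so [Delta / M] is the average over [j] of products of ratios that tend
   to [1]. *)
From mathcomp Require Import all_boot all_order all_algebra complex.
From mathcomp Require Import all_classical all_reals all_analysis.
From mathcomp Require Import ring.
Set Implicit Arguments. Unset Strict Implicit. Unset Printing Implicit Defensive.
Import Order.TTheory GRing.Theory Num.Theory.
Import numFieldNormedType.Exports.
Local Open Scope classical_set_scope.
Local Open Scope complex_scope.
Local Open Scope ring_scope.

Lemma big_sum_single_support (R : Type) (idx : R) (op : Monoid.com_law idx)
    (I : finType) (f : nat -> R) (x : I -> nat) :
  f 0%N = idx -> (forall i j, 0 < x i -> 0 < x j -> i = j)%N ->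
  \big[op/idx]_i f (x i) = f (\sum_i x i)%N.
Proof.
move=> f0 x_supp; case: (pickP (fun i => 0 < x i)%N) => [i0 x_i0|x_0].
  have x_0 i : i != i0 -> x i = 0%N.
    by move=> ii0; apply/eqP; rewrite -leqn0 leqNgt; apply: contra ii0 => /x_supp/(_ x_i0) ->.
  have -> : (\sum_i x i = x i0)%N by rewrite (bigD1 i0) //= big1 ?addn0.
  by rewrite (bigD1 i0) //= big1 ?Monoid.mulm1 // => i /x_0 ->.
have {}x_0 i : x i = 0%N by apply/eqP; rewrite -leqn0 leqNgt x_0.
have -> : (\sum_i x i = 0)%N by rewrite big1.
by rewrite f0 big1 // => i _; rewrite x_0.
Qed.

Section Graphs.
Variable V : finType.
Implicit Types (es : seq (V * V)) (v : V).

Lemma in_vset es v : (v \in vset es) = (0 < deg es v)%N.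
Proof. by rewrite inE /deg has_count. Qed.

Lemma n_dirichletE es bc :
  n_dirichlet es bc = (\sum_v ((deg es v == 1%N) && bc v))%N.
Proof.
rewrite /n_dirichlet -sum1_card big_mkcond /=; apply: eq_bigr => v _.
by rewrite !inE has_count -/(deg es v); case: (deg es v) => [|[|]] //=; case: (bc v).
Qed.

End Graphs.

Section MainTerm.
Variables (R : realType) (V : finType).
Implicit Types (es : seq (V * V)) (bc : V -> bool) (t : R).

Definition tau_power t (d : nat) : R := t ^ (1%:Z - d%:Z).

Definition tree_growth es t : R :=
  2 ^- size es * \prod_(v in vset es) (deg es v)%:R * expR ((size es)%:R * t * pi).

Lemma main_termE es bc t :
  main_term es bc t = tau_power t (n_dirichlet es bc) * tree_growth es t.
Proof. by rewrite /main_term /tau_power /tree_growth !mulrA. Qed.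

Lemma tau_powerE t d : t != 0 -> tau_power t d = t / t ^+ d.
Proof. by move=> t0; rewrite /tau_power exprzDr ?unitfE // expr1z -exprnN. Qed.

Lemma main_term_gt0 es bc t : 0 < t -> 0 < main_term es bc t.
Proof.
move=> t0; rewrite main_termE /tree_growth !mulr_gt0 ?exprz_gt0 ?expR_gt0 //.
by apply: prodr_gt0 => v; rewrite in_vset ltr0n.
Qed.

Lemma tau_power_split s (d : 'I_s -> nat) j t : t != 0 ->
  tau_power t (d j) * \prod_(k | k != j) tau_power t (d k).+1 =
  tau_power t (\sum_k d k).
Proof.
move=> t0; rewrite (eq_bigr (fun k => (t ^+ d k)^-1)); last first.
  by move=> k _; rewrite tau_powerE // exprSr invfM mulrCA divff // mulr1.
by rewrite !tau_powerE // [in RHS](bigD1 j) //= exprD invfM prodfV prodrXr mulrA.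
Qed.

End MainTerm.

Section Split.
Variables (V : finType) (es : seq (V * V)) (u : V) (s : nat) (parts : 'I_s -> seq (V * V)).
Hypothesis deg_u_gt1 : (1 < deg es u)%N.
Hypothesis parts_cover : perm_eq (flatten [seq parts i | i <- enum 'I_s]) es.
Hypothesis deg_parts_u : forall i, deg (parts i) u = 1%N.
Hypothesis parts_meet_at_u :
  forall i j, i != j -> vset (parts i) :&: vset (parts j) = [set u]%SET.

Lemma deg_split v : deg es v = (\sum_i deg (parts i) v)%N.
Proof.
rewrite /deg -(permP parts_cover) count_flatten -map_comp.
by rewrite sumnE big_map big_enum.
Qed.

Lemma size_split : size es = (\sum_i size (parts i))%N.
Proof.
rewrite -(perm_size parts_cover) size_flatten /shape -map_comp.
by rewrite sumnE big_map big_enum.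
Qed.

Lemma deg_split_vertex : deg es u = s.
Proof. by rewrite deg_split (eq_bigr _ (fun i _ => deg_parts_u i)) sum1_card card_ord. Qed.

Lemma num_parts_gt0 : (0 < s)%N.
Proof. by rewrite -deg_split_vertex (ltn_trans _ deg_u_gt1). Qed.

Lemma parts_disjoint_off_u v : v != u ->
  forall i j, (0 < deg (parts i) v -> 0 < deg (parts j) v -> i = j)%N.
Proof.
move=> vu i j vi vj; apply/eqP; apply: contraT => /parts_meet_at_u/setP/(_ v).
by rewrite finset.in_setI !in_vset vi vj finset.in_set1 (negbTE vu).
Qed.

Lemma n_dirichlet_split bc :
  (\sum_i n_dirichlet (parts i) (bc_at bc u false))%N = n_dirichlet es bc.
Proof.
rewrite n_dirichletE; under eq_bigr do rewrite n_dirichletE.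
rewrite exchange_big /=; apply: eq_bigr => v _.
have [->|vu] := eqVneq v u.
  by rewrite (gtn_eqF deg_u_gt1) big1 // => i _; rewrite /bc_at eqxx andbF.
under eq_bigr do rewrite /bc_at (negbTE vu).
rewrite deg_split.
apply: (@big_sum_single_support _ _ _ _ (fun n => nat_of_bool ((n == 1%N) && bc v))) => //.
exact: parts_disjoint_off_u.
Qed.

Lemma n_dirichlet_bc_at_true i bc :
  n_dirichlet (parts i) (bc_at bc u true) =
  (n_dirichlet (parts i) (bc_at bc u false)).+1.
Proof.
rewrite !n_dirichletE (bigD1 u) //= [in RHS](bigD1 u) //= /bc_at !eqxx deg_parts_u.
by congr S; apply: eq_bigr => v /negbTE ->.
Qed.

Lemma prod_deg_split (R : comNzRingType) :
  s%:R * \prod_i \prod_(v in vset (parts i)) ((deg (parts i) v)%:R : R)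
  = \prod_(v in vset es) (deg es v)%:R.
Proof.
pose phi n : R := if (0 < n)%N then n%:R else 1.
have prod_vsetE es' : \prod_(v in vset es') ((deg es' v)%:R : R) = \prod_v phi (deg es' v).
  by rewrite big_mkcond; apply: eq_bigr => v _; rewrite in_vset.
rewrite prod_vsetE; under eq_bigr do rewrite prod_vsetE.
rewrite exchange_big /= (bigD1 u) //= [in RHS](bigD1 u) //= big1; last first.
  by move=> i _; rewrite deg_parts_u.
rewrite mul1r {2}/phi deg_split_vertex num_parts_gt0; congr (_ * _).
apply: eq_bigr => v vu; rewrite deg_split.
by apply: (@big_sum_single_support _ _ _ _ phi) => //; exact: parts_disjoint_off_u.
Qed.

Lemma tree_growth_split (R : realType) (t : R) :
  tree_growth es t = s%:R * \prod_i tree_growth (parts i) t.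
Proof.
rewrite /tree_growth !big_split /= -prod_deg_split.
rewrite -expR_sum size_split prodfV prodrXr natr_sum !mulr_suml.
ring.
Qed.

Lemma main_term_split (R : realType) bc j (t : R) : 0 < t ->
  main_term (parts j) (bc_at bc u false) t *
    \prod_(k | k != j) main_term (parts k) (bc_at bc u true) t
  = main_term es bc t / s%:R.
Proof.
move=> t0; rewrite (eq_bigr (fun k => tau_power t
    (n_dirichlet (parts k) (bc_at bc u false)).+1 * tree_growth (parts k) t)); last first.
  by move=> k _; rewrite main_termE n_dirichlet_bc_at_true.
rewrite big_split /= main_termE mulrACA tau_power_split ?gt_eqF //.
rewrite n_dirichlet_split main_termE tree_growth_split [X in s%:R * X](bigD1 j) //=.
have s_neq0 : (s%:R : R) != 0 by rewrite pnatr_eq0 -lt0n num_parts_gt0.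
by field.
Qed.

End Split.

Section Asymptotics.
Variable R : realType.
Implicit Types (t : R).

Lemma cvg_mean_prod s (fN fD : 'I_s -> R -> R) : (0 < s)%N ->
  (forall j, fN j t @[t --> +oo] --> (1 : R)) ->
  (forall k, fD k t @[t --> +oo] --> (1 : R)) ->
  s%:R^-1 * \sum_j (fN j t * \prod_(k | k != j) fD k t) @[t --> +oo] --> (1 : R).
Proof.
move=> s_gt0 fN1 fD1.
have mean1 : s%:R^-1 * \sum_(j < s) (1 * \prod_(k < s | k != j) 1) = 1 :> R.
  rewrite (eq_bigr (fun _ => 1)) => [|j _]; last by rewrite big1_eq mul1r.
  by rewrite sumr_const card_ord mulVf // pnatr_eq0 -lt0n.
rewrite -[X in _ --> X]mean1.
apply: cvgMl_tmp; apply: (cvg_big add_continuous) => // j _; apply: cvgM; first exact: fN1.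
by apply: (cvg_big mul_continuous) => // k _; exact: fD1.
Qed.

Lemma cvg_expR_Nmulpi : expR (- (t * pi)) @[t --> +oo] --> (0 : R).
Proof.
apply: (@squeeze_cvgr _ _ _ _ (fun=> 0) (fun t => expR (- t))); last 2 first.
- exact: cvg_cst.
- exact: cvgr_expR.
near=> t.
have t_gt0 : 0 < t by near: t; apply: nbhs_pinfty_gt; exact: num_real.
rewrite expR_ge0 /= ler_expR lerN2 ler_peMr ?ltW //.
by rewrite (lt_le_trans _ (pi_ge2 R)) // ltr1n.
Unshelve. all: end_near.
Qed.

Definition base_value (b0 b1 : bool) t : R :=
  match b0, b1 with
  | true, true => sinhR (t * pi) / t
  | true, false | false, true => coshR (t * pi)
  | false, false => t * sinhR (t * pi)
  end.

Lemma base_charfun_iaxis (b0 b1 : bool) t : 0 < t ->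
  base_charfun b0 b1 (0 +i* t) = (base_value b0 b1 t)%:C.
Proof.
move=> t_gt0; have it_neq0 : (0 +i* t) != 0.
  by rewrite eq_complex /= negb_and orbC gt_eqF.
case: b0; case: b1 => /=.
- rewrite /Spi (negbTE it_neq0); apply/(canLR (mulfK it_neq0)).
  rewrite /csin /= !mul0r !mulr0 !subr0 add0r sin0 cos0 mul0r mul1r.
  apply/eqP; rewrite eq_complex /= !mulr0 !mul0r subr0 addr0 eqxx /=.
  by apply/eqP; rewrite divfK // gt_eqF.
- by rewrite /dSpi /ccos /= !(mul0r, mulr0, subr0, add0r, sin0, cos0, mul1r, oppr0).
- by rewrite /Cpi /ccos /= !(mul0r, mulr0, subr0, add0r, sin0, cos0, mul1r, oppr0).
- rewrite /dCpi /csin /= !(mul0r, mulr0, subr0, add0r, sin0, cos0, mul1r, oppr0).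
  by apply/eqP; rewrite eq_complex /=; apply/andP; split; apply/eqP; ring.
Qed.

Lemma base_value_ratio (b0 b1 : bool) t : 0 < t ->
  base_value b0 b1 t / (tau_power t (b0 + b1) * (2^-1 * expR (t * pi))) =
  1 + (if b0 == b1 then -1 else 1) * expR (- (t * pi)) ^+ 2.
Proof.
move=> t_gt0; have t_neq0 : t != 0 by rewrite gt_eqF.
have e_neq0 : expR (t * pi) != 0 by rewrite gt_eqF ?expR_gt0.
rewrite tau_powerE //; case: b0; case: b1 => /=;
  by rewrite /coshR /sinhR expRN ?expr0 ?expr1; field; rewrite ?e_neq0 ?t_neq0.
Qed.

Lemma main_term_edge (V : finType) (a b : V) bc t : a != b ->
  main_term [:: (a, b)] bc t = tau_power t (bc a + bc b) * (2^-1 * expR (t * pi)).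
Proof.
move=> ab; have ba : b != a by rewrite eq_sym.
have deg_ab v : deg [:: (a, b)] v = ((v == a) || (v == b) : nat).
  by rewrite /deg /incident /= addn0 ![_ == v]eq_sym.
have n_dirichlet_ab : n_dirichlet [:: (a, b)] bc = (bc a + bc b)%N.
  rewrite n_dirichletE (bigD1 a) // (bigD1 b) ?ba // big1 ?addn0 => [|v /andP[va vb]].
    by rewrite !deg_ab !eqxx orbT /= addn0.
  by rewrite deg_ab (negbTE va) (negbTE vb).
rewrite main_termE n_dirichlet_ab /tree_growth big1 ?mulr1 ?mul1r ?expr1 // => v.
by rewrite in_vset deg_ab; case: (_ || _).
Qed.

Definition charfun_asymp (V : finType) (es : seq (V * V)) (bc : V -> bool)
    (D : R[i] -> R[i]) : Prop :=
  (forall t, 0 < t -> D (0 +i* t) = (complex.Re (D (0 +i* t)))%:C) /\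
  complex.Re (D (0 +i* t)) / main_term es bc t @[t --> +oo] --> (1 : R).

Lemma charfun_asymp_edge (V : finType) (a b : V) bc : a != b ->
  charfun_asymp [:: (a, b)] bc (base_charfun (bc a) (bc b)).
Proof.
move=> ab; split => [t t_gt0|]; first by rewrite base_charfun_iaxis.
set c : R := if bc a == bc b then -1 else 1.
have : 1 + c * (expR (- (t * pi)) * expR (- (t * pi))) @[t --> +oo] --> 1 + c * (0 * 0).
  apply: cvgD; first exact: cvg_cst.
  by apply: cvgMl_tmp; apply: cvgM; exact: cvg_expR_Nmulpi.
rewrite mulr0 mulr0 addr0; apply: cvg_trans; apply: near_eq_cvg; near=> t.
have t_gt0 : 0 < t by near: t; apply: nbhs_pinfty_gt; exact: num_real.
by rewrite base_charfun_iaxis // main_term_edge // base_value_ratio // expr2.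
Unshelve. all: end_near.
Qed.

Lemma charfun_asymp_split (V : finType) (es : seq (V * V)) bc u s
    (parts : 'I_s -> seq (V * V)) (DD DN : 'I_s -> R[i] -> R[i]) :
  (1 < deg es u)%N ->
  perm_eq (flatten [seq parts i | i <- enum 'I_s]) es ->
  (forall i, deg (parts i) u = 1%N) ->
  (forall i j, i != j -> vset (parts i) :&: vset (parts j) = [set u]%SET) ->
  (forall i, charfun_asymp (parts i) (bc_at bc u true) (DD i)) ->
  (forall i, charfun_asymp (parts i) (bc_at bc u false) (DN i)) ->
  charfun_asymp es bc
    (fun rho => \sum_(i < s) DN i rho * \prod_(k < s | k != i) DD k rho).
Proof.
move=> deg_u_gt1 parts_cover deg_parts_u parts_meet_at_u asympD asympN.
have split_real t : 0 < t ->
    \sum_(j < s) DN j (0 +i* t) * \prod_(k < s | k != j) DD k (0 +i* t) =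
    (\sum_(j < s) complex.Re (DN j (0 +i* t)) *
       \prod_(k < s | k != j) complex.Re (DD k (0 +i* t)))%:C.
  move=> t_gt0; rewrite rmorph_sum; apply: eq_bigr => j _.
  rewrite rmorphM rmorph_prod {1}((asympN j).1 t t_gt0); congr (_ * _).
  by apply: eq_bigr => k _; rewrite {1}((asympD k).1 t t_gt0).
split=> [t t_gt0 | ]; first by rewrite /= split_real.
apply: cvg_trans (cvg_mean_prod (num_parts_gt0 deg_u_gt1 parts_cover deg_parts_u)
  (fun j => (asympN j).2) (fun k => (asympD k).2)).
apply: near_eq_cvg; near=> t.
have t_gt0 : 0 < t by near: t; apply: nbhs_pinfty_gt; exact: num_real.
rewrite /= split_real //= mulr_suml mulr_sumr; apply: eq_bigr => j _.
rewrite prodf_div mulrACA -invfM.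
rewrite (main_term_split deg_u_gt1 parts_cover deg_parts_u parts_meet_at_u) //.
have s_neq0 : (s%:R : R) != 0.
  by rewrite pnatr_eq0 -lt0n (num_parts_gt0 deg_u_gt1 parts_cover deg_parts_u).
by rewrite invf_div mulrCA mulKf.
Unshelve. all: end_near.
Qed.

Lemma charfun_asymptotics (V : finType) (es : seq (V * V)) bc D :
  charfun es bc D -> charfun_asymp es bc D.
Proof.
elim=> [a b {}bc ab | {}es {}bc u s parts DD DN _ deg_u_gt1 parts_cover _
  deg_parts_u parts_meet_at_u _ asympD _ asympN].
  exact: charfun_asymp_edge.
exact: (charfun_asymp_split deg_u_gt1 parts_cover deg_parts_u parts_meet_at_u asympD asympN).
Qed.

End Asymptotics.

Theorem lemma2 (R : realType) (V : finType) (es : seq (V * V))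
  (bc : V -> bool) (Delta0 : R[i] -> R[i]) :
  is_tree es ->
  charfun es bc Delta0 ->
  exists eps : R -> R[i],
    (complex.Re (eps tau) @[tau --> +oo] --> 0) /\
    (complex.Im (eps tau) @[tau --> +oo] --> 0) /\
    (forall tau : R, 0 < tau ->
       Delta0 (0 +i* tau) = (main_term es bc tau)%:C * (1 + eps tau)).
Proof.
move=> _ /charfun_asymptotics[real_iaxis ratio_cvg1].
exists (fun t => (complex.Re (Delta0 (0 +i* t)) / main_term es bc t - 1)%:C).
split; [|split].
- by rewrite -[X in _ --> X](subrr 1); apply: cvgB => //; exact: cvg_cst.
- exact: cvg_cst.
- move=> t t_gt0; have M_neq0 : main_term es bc t != 0 by rewrite gt_eqF ?main_term_gt0.
  rewrite {1}real_iaxis // -[1 : R[i]]/(1 : R)%:C -rmorphD -rmorphM.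
  by congr _%:C; field.
Qed.
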